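(* There is no semi-equivelar map of type $(4^3,6)$ (three quadrilaterals and one hexagon around each vertex) on the closed surface of Euler characteristic $-1$. *)

From mathcomp Require Import all_boot all_order all_algebra.
Set Implicit Arguments. Unset Strict Implicit. Unset Printing Implicit Defensive.

(* A map is given combinatorially by a finite vertex type V, a finite face
   type F and, for every face f, its boundary cycle bd f (a cyclically
   ordered sequence of distinct vertices). *)

Definition edge_of (V F : finType) (bd : F -> seq V) (f : F) (u v : V) : bool :=
  ((u \in bd f) && (next (bd f) u == v)) || ((v \in bd f) && (next (bd f) v == u)).

Definition adjacent (V F : finType) (bd : F -> seq V) (u v : V) : bool :=
  [exists f, edge_of bd f u v].

Definition edges (V F : finType) (bd : F -> seq V) : {set {set V}} :=
  [set [set u; v] | u in V, v in V & adjacent bd u v].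

Definition vert_set (V F : finType) (bd : F -> seq V) (f : F) : {set V} :=
  [set x in bd f].

Definition face_cycle_at (V F : finType) (bd : F -> seq V) (v : V) (fs : seq F) : Prop :=
  [/\ uniq fs, 3 <= size fs,
      (forall f, (f \in fs) = (v \in bd f)) &
      cycle (fun f g => [exists w, edge_of bd f v w && edge_of bd g v w]) fs].

Definition polyhedral_map (V F : finType) (bd : F -> seq V) : Prop :=
      (forall f, uniq (bd f) /\ 3 <= size (bd f)) /\
      (forall v, exists f, v \in bd f) /\
      (forall u v, adjacent bd u v -> #|[set f | edge_of bd f u v]| = 2) /\
      (* the faces around each vertex form one cycle (vertex links are circles) *)
      (forall v, exists fs, face_cycle_at bd v fs) /\
      (forall f g, f != g ->
         let S := vert_set bd f :&: vert_set bd g in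
         S = set0 \/ #|S| = 1 \/
         exists u v, [/\ S = [set u; v], u != v, edge_of bd f u v & edge_of bd g u v]) /\
      (forall u v, connect (adjacent bd) u v).

Definition vertex_type (V F : finType) (bd : F -> seq V) (v : V) (t : seq nat) : Prop :=
  exists fs, face_cycle_at bd v fs /\
    exists i, map (fun f => size (bd f)) fs = rot i t \/
              map (fun f => size (bd f)) fs = rot i (rev t).

Definition semi_equivelar (V F : finType) (bd : F -> seq V) (t : seq nat) : Prop :=
  polyhedral_map bd /\ forall v, vertex_type bd v t.

Definition euler_char (V F : finType) (bd : F -> seq V) : int :=
  (#|V|%:Z - #|edges bd|%:Z + #|F|%:Z)%R.

From mathcomp Require Import all_boot all_order all_algebra.
From mathcomp Require Import zify.
Set Implicit Arguments. Unset Strict Implicit. Unset Printing Implicit Defensive.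

(* Double counting in such a map gives the usual relations: every vertex lies
   on three quadrilaterals and one hexagon and has degree 4, so with n = #|V|
   the map has n/6 hexagons, 3n/4 quadrilaterals and 2n edges, whence
   chi = n - 2n + n/6 + 3n/4 = -n/12.  Thus chi = -1 forces n = 12, exactly two
   hexagons h1, h2 (which together cover all vertices) and nine quadrilaterals.
   Since two distinct faces of a polyhedral map meet in at most an edge, a
   quadrilateral q has at most two vertices on each hexagon; as its four
   vertices are covered by h1 and h2, q meets h1 in exactly two vertices, hence
   in an edge of h1.  An edge lies on only two faces, one of which is h1, so
   distinct quadrilaterals meet h1 in distinct edges: nine quadrilaterals would
   need nine of the six edges of h1, a contradiction. *)

Lemma next_prev_neq (T : eqType) (s : seq T) v :
  uniq s -> 3 <= size s -> v \in s ->
  [/\ next s v != prev s v, next s v != v & prev s v != v].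
Proof.
move=> s_uniq s_size /rot_to[i s' rot_s].
rewrite -(next_rot i s_uniq) -(prev_rot i s_uniq) rot_s.
move: s_size s_uniq; rewrite -(size_rot i) -(rot_uniq i) rot_s.
case: s' {rot_s} => [|y [|z t]] // _ c_uniq.
set c := [:: v, y, z & t] in c_uniq *.
have /and3P[] := c_uniq; rewrite !inE !negb_or => /and3P[vy vz _] _ _.
have next_v : next c v = y by rewrite /next /= eqxx.
have next_y : next c y = z by rewrite /next /= eq_sym (negbTE vy) eqxx.
have prev_ne : prev c v != v.
  by apply: contraNneq vy => prev_v; rewrite -next_v -[X in next _ X]prev_v next_prev.
rewrite next_v; split; [|by rewrite eq_sym|by []].
by apply: contraNneq vz => y_prev; rewrite -next_y y_prev next_prev.
Qed.

Lemma card_set_sum (A : finType) (p : pred A) : #|[set x | p x]| = \sum_x (p x : nat).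
Proof.
rewrite -sum1_card big_mkcond /=; apply: eq_bigr => x _.
by rewrite inE; case: (p x).
Qed.

Lemma set2_inj (T : finType) (u v u' v' : T) :
  [set u; v] = [set u'; v'] -> u != v -> (u = u' /\ v = v') \/ (u = v' /\ v = u').
Proof.
move=> uv_eq uv.
have : v \in [set u'; v'] by rewrite -uv_eq !inE eqxx orbT.
have : u \in [set u'; v'] by rewrite -uv_eq !inE eqxx.
rewrite !inE => /orP[]/eqP uE /orP[]/eqP vE; rewrite uE vE in uv *.
- by rewrite eqxx in uv.
- by left.
- by right.
- by rewrite eqxx in uv.
Qed.

Section Map.
Variables (V F : finType) (bd : F -> seq V).

Definition faces_of_size (n : nat) : {set F} := [set f | size (bd f) == n].

Definition meet_in_edge (f g : F) : Prop :=
  exists u v, [/\ vert_set bd f :&: vert_set bd g = [set u; v], u != v,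
                  edge_of bd f u v & edge_of bd g u v].

Definition face_edges (f : F) : {set {set V}} :=
  [set [set x; next (bd f) x] | x in vert_set bd f].

Lemma edge_ofC f u v : edge_of bd f u v = edge_of bd f v u.
Proof. by rewrite /edge_of orbC. Qed.

Lemma adjacentC u v : adjacent bd u v = adjacent bd v u.
Proof. by apply/existsP/existsP => -[f h]; exists f; rewrite edge_ofC. Qed.

Hypothesis polygon : forall f, uniq (bd f) /\ 3 <= size (bd f).

Lemma card_vert_set f : #|vert_set bd f| = size (bd f).
Proof.
have [f_uniq _] := polygon f; rewrite -(card_uniqP f_uniq).
by apply: eq_card => x; rewrite inE.
Qed.

Lemma edge_ofE f v w :
  edge_of bd f v w = (v \in bd f) && ((w == next (bd f) v) || (w == prev (bd f) v)).
Proof.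
have [f_uniq _] := polygon f.
rewrite /edge_of; case v_in: (v \in bd f) => /=; last first.
  by apply/negP => /andP[w_in /eqP w_next]; rewrite -w_next mem_next w_in in v_in.
rewrite eq_sym; congr (_ || _); apply/idP/idP.
  by case/andP=> _ /eqP <-; rewrite prev_next.
by move/eqP => ->; rewrite mem_prev v_in next_prev ?eqxx.
Qed.

Lemma edge_of_irr f v : edge_of bd f v v = false.
Proof.
rewrite edge_ofE; case v_in: (v \in bd f) => //=.
have [f_uniq f_size] := polygon f.
have [_ nv pv] := next_prev_neq f_uniq f_size v_in.
by rewrite !(eq_sym v) (negPf nv) (negPf pv).
Qed.

Lemma adjacent_irr u : adjacent bd u u = false.
Proof. by apply/existsP => -[f]; rewrite edge_of_irr. Qed.

Lemma card_edge_of f v : #|[set w | edge_of bd f v w]| = 2 * (v \in bd f).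
Proof.
case v_in: (v \in bd f); last first.
  by apply/eqP; rewrite cards_eq0; apply/eqP/setP => w; rewrite !inE edge_ofE v_in.
have -> : [set w | edge_of bd f v w] = [set next (bd f) v; prev (bd f) v].
  by apply/setP => w; rewrite !inE edge_ofE v_in.
have [f_uniq f_size] := polygon f.
by have [np _ _] := next_prev_neq f_uniq f_size v_in; rewrite cards2 np.
Qed.

Lemma card_face_edges f : #|face_edges f| <= size (bd f).
Proof. by rewrite -card_vert_set leq_imset_card. Qed.

Lemma edge_of_face_edges f u v : edge_of bd f u v -> [set u; v] \in face_edges f.
Proof.
rewrite /edge_of => /orP[] /andP[x_in /eqP x_next]; apply/imsetP.
  by exists u; rewrite ?inE // x_next.
by exists v; rewrite ?inE // x_next setUC.
Qed.

Hypothesis edge_on_two_faces :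
  forall u v, adjacent bd u v -> #|[set f | edge_of bd f u v]| = 2.

(* The degree of a vertex equals the number of faces around it: counting
   incident (neighbour, face) pairs, each neighbour gives two faces and each
   face two neighbours. *)
Lemma degree_eq_faces v : #|[set w | adjacent bd v w]| = #|[set f | v \in bd f]|.
Proof.
apply/eqP; rewrite -(eqn_pmul2l (_ : 0 < 2)) //; apply/eqP.
transitivity (\sum_w #|[set f | edge_of bd f v w]|).
  rewrite card_set_sum big_distrr /=; apply: eq_bigr => w _.
  case vw: (adjacent bd v w); first by rewrite edge_on_two_faces.
  apply/esym/eqP; rewrite muln0 cards_eq0; apply/eqP/setP => f; rewrite !inE.
  by apply: contraFF vw => vw_f; apply/existsP; exists f.
under eq_bigr => w _ do rewrite card_set_sum.
rewrite exchange_big card_set_sum big_distrr /=; apply: eq_bigr => f _.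
by rewrite -card_set_sum card_edge_of.
Qed.

Lemma card_edge e : e \in edges bd -> #|e| = 2.
Proof.
case/imset2P => u v _; rewrite inE => /andP[_ uv] ->.
by rewrite cards2; case: eqP uv => // ->; rewrite adjacent_irr.
Qed.

Lemma card_edges_at v : #|[set e in edges bd | v \in e]| = #|[set w | adjacent bd v w]|.
Proof.
have -> : [set e in edges bd | v \in e] = (fun w => [set v; w]) @: [set w | adjacent bd v w].
  apply/setP => e; rewrite inE; apply/andP/imsetP.
    case=> /imset2P [a b _]; rewrite inE => /andP[_ ab] -> /set2P[] ->.
      by exists b; rewrite ?inE.
    by exists a; rewrite ?inE 1?adjacentC // setUC.
  case=> w; rewrite inE => vw ->; split; last by rewrite !inE eqxx.
  by apply/imset2P; exists v w; rewrite ?inE.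
rewrite card_imset // => a b /setP ab; have := ab a; rewrite !inE eqxx orbT.
case/esym/orP => [/eqP va|/eqP //]; have := ab b; rewrite !inE eqxx orbT -va.
by case/orP => /eqP.
Qed.

Lemma handshake : 2 * #|edges bd| = \sum_v #|[set w | adjacent bd v w]|.
Proof.
transitivity (\sum_(e in edges bd) #|e|).
  by rewrite -sum1_card big_distrr /=; apply: eq_bigr => e e_in; rewrite card_edge.
transitivity (\sum_(e in edges bd) \sum_v (v \in e : nat)).
  by apply: eq_bigr => e _; rewrite -card_set_sum; apply: eq_card => v; rewrite inE.
rewrite exchange_big; apply: eq_bigr => v _.
rewrite -card_edges_at card_set_sum big_mkcond /=; apply: eq_bigr => e _.
by case: (e \in edges bd).
Qed.

Lemma incidence_size n :
  \sum_v #|[set f | (v \in bd f) && (size (bd f) == n)]| = n * #|faces_of_size n|.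
Proof.
under eq_bigr => v _ do rewrite card_set_sum.
rewrite exchange_big card_set_sum big_distrr /=; apply: eq_bigr => f _.
transitivity ((size (bd f) == n) * \sum_v (v \in bd f : nat)).
  by rewrite big_distrr; apply: eq_bigr => v _; case: (_ == n); case: (v \in _).
rewrite -card_set_sum (eq_card (B := vert_set bd f)) => [|x]; last by rewrite !inE.
by rewrite card_vert_set; case: eqP => [->|_] /=; rewrite ?muln1 ?mul1n ?muln0.
Qed.

Hypothesis faces_meet : forall f g, f != g ->
  let S := vert_set bd f :&: vert_set bd g in
  S = set0 \/ #|S| = 1 \/
  exists u v, [/\ S = [set u; v], u != v, edge_of bd f u v & edge_of bd g u v].

Lemma card_meet_le2 f g : f != g -> #|vert_set bd f :&: vert_set bd g| <= 2.
Proof.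
case/faces_meet => [->|[->|[u [v [-> uv _ _]]]]]; by rewrite ?cards0 ?cards2 ?uv.
Qed.

Lemma meet_in_edge_of_card2 f g :
  f != g -> #|vert_set bd f :&: vert_set bd g| = 2 -> meet_in_edge f g.
Proof. by case/faces_meet => [->|[->|//]]; rewrite ?cards0. Qed.

(* At most size (bd f) faces meet f in an edge: distinct such faces meet f in
   distinct edges, since an edge of f lies on only one other face. *)
Lemma card_faces_meeting_in_edge f (Q : {set F}) :
  f \notin Q -> (forall g, g \in Q -> meet_in_edge g f) -> #|Q| <= size (bd f).
Proof.
move=> f_notin Q_meet; pose common g := vert_set bd g :&: vert_set bd f.
have common_inj : {in Q &, injective common}.
  move=> g g' g_in g'_in common_eq; apply/eqP; apply: contraT => gg'.
  have [u [v [g_uv uv gE fE]]] := Q_meet g g_in.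
  have [u' [v' [g'_uv _ g'E _]]] := Q_meet g' g'_in.
  have g'E_uv : edge_of bd g' u v.
    rewrite /common g_uv g'_uv in common_eq.
    by case: (set2_inj common_eq uv) => -[-> ->] //; rewrite edge_ofC.
  have three_faces : [set f; g; g'] \subset [set h | edge_of bd h u v].
    by apply/subsetP => h; rewrite !inE => /orP[/orP[]|] /eqP ->.
  have fg : f != g by apply: contraNneq f_notin => ->.
  have fg' : f != g' by apply: contraNneq f_notin => ->.
  have := subset_leq_card three_faces.
  rewrite edge_on_two_faces; last by apply/existsP; exists f.
  by rewrite -setUA cardsU1 cards2 !inE negb_or fg fg' gg'.
have common_edges : common @: Q \subset face_edges f.
  apply/subsetP => e /imsetP [g g_in ->].
  have [u [v [g_uv _ _ fE]]] := Q_meet g g_in; rewrite /common g_uv.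
  exact: edge_of_face_edges fE.
by rewrite -(card_in_imset common_inj) (leq_trans (subset_leq_card common_edges))
  ?card_face_edges.
Qed.

End Map.

Section SemiEquivelar.
Variables (V F : finType) (bd : F -> seq V) (t : seq nat).
Hypothesis polygon : forall f, uniq (bd f) /\ 3 <= size (bd f).
Hypothesis edge_on_two_faces :
  forall u v, adjacent bd u v -> #|[set f | edge_of bd f u v]| = 2.
Hypothesis vtype : forall v, vertex_type bd v t.

Lemma faces_at_type v (P : pred nat) :
  #|[set f | (v \in bd f) && P (size (bd f))]| = count P t.
Proof.
have [fs [[fs_uniq _ fs_mem _] [i fs_type]]] := vtype v.
transitivity #|[seq f <- fs | P (size (bd f))]|.
  by apply: eq_card => f; rewrite inE mem_filter -fs_mem andbC.
rewrite (card_uniqP _) ?filter_uniq // size_filter -(count_map _ P).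
have count_rot s : count P (rot i s) = count P s by apply/permP; rewrite perm_rot.
by case: fs_type => ->; rewrite count_rot ?count_rev.
Qed.

Lemma face_size_in_type f : size (bd f) \in t.
Proof.
have [_] := polygon f; case f_bd: (bd f) => [|v s] // _.
rewrite -has_pred1 has_count -(faces_at_type v) card_gt0.
by apply/set0Pn; exists f; rewrite inE f_bd mem_head /= ?eqxx.
Qed.

Lemma card_faces_of_size n : n * #|faces_of_size bd n| = count_mem n t * #|V|.
Proof.
rewrite -incidence_size // (eq_bigr (fun _ => count_mem n t)) => [|v _].
  by rewrite sum_nat_const mulnC.
by rewrite (faces_at_type v (pred1 n)).
Qed.

Lemma card_edges_type : 2 * #|edges bd| = size t * #|V|.
Proof.
rewrite handshake // (eq_bigr (fun _ => size t)) => [|v _].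
  by rewrite sum_nat_const mulnC.
rewrite degree_eq_faces // -count_predT -(faces_at_type v predT).
by apply: eq_card => f; rewrite !inE andbT.
Qed.

End SemiEquivelar.

Section Type4446.
Variables (V F : finType) (bd : F -> seq V).
Hypothesis polygon : forall f, uniq (bd f) /\ 3 <= size (bd f).
Hypothesis edge_on_two_faces :
  forall u v, adjacent bd u v -> #|[set f | edge_of bd f u v]| = 2.
Hypothesis vtype : forall v, vertex_type bd v [:: 4; 4; 4; 6].

Lemma euler_char_4446 : (12%:Z * euler_char bd = - #|V|%:Z)%R.
Proof.
have hexagons := card_faces_of_size polygon vtype 6.
have quads := card_faces_of_size polygon vtype 4.
have edges_2V := card_edges_type polygon edge_on_two_faces vtype.
have faces_4_6 : #|F| = #|faces_of_size bd 4| + #|faces_of_size bd 6|.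
  rewrite !card_set_sum -big_split /= -sum1_card; apply: eq_bigr => f _.
  by have := face_size_in_type polygon vtype f; rewrite !inE => /or4P[] /eqP ->.
rewrite /euler_char; move: hexagons quads edges_2V faces_4_6 => /=; lia.
Qed.

Lemma hexagon_at v : exists2 h, h \in faces_of_size bd 6 & v \in bd h.
Proof.
have : 0 < #|[set f | (v \in bd f) && (size (bd f) == 6)]|.
  by rewrite (faces_at_type vtype v (pred1 6)).
by case/card_gt0P => h; rewrite !inE => /andP[v_in h6]; exists h; rewrite ?inE.
Qed.

Hypothesis faces_meet : forall f g, f != g ->
  let S := vert_set bd f :&: vert_set bd g in
  S = set0 \/ #|S| = 1 \/
  exists u v, [/\ S = [set u; v], u != v, edge_of bd f u v & edge_of bd g u v].

(* If there are only two hexagons h1, h2, every quadrilateral meets h1 in an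
   edge: its four vertices are covered by the two hexagons, and it shares at
   most two vertices with each. *)
Lemma quad_meets_hexagon h1 h2 : faces_of_size bd 6 = [set h1; h2] ->
  forall q, q \in faces_of_size bd 4 -> meet_in_edge bd q h1.
Proof.
move=> hexagons q; rewrite inE => /eqP q4.
have hexagon_ne h : h \in [set h1; h2] -> q != h.
  by rewrite -hexagons inE => /eqP h6; apply/eqP => qh; rewrite qh h6 in q4.
have qh1 := hexagon_ne h1 (set21 h1 h2).
have qh2 := hexagon_ne h2 (set22 h1 h2).
apply: meet_in_edge_of_card2 => //.
have covered : vert_set bd q \subset
    (vert_set bd q :&: vert_set bd h1) :|: (vert_set bd q :&: vert_set bd h2).
  apply/subsetP => x; rewrite !inE => x_q; rewrite x_q /=.
  have [h] := hexagon_at x; rewrite hexagons !inE => /orP[] /eqP -> ->; by rewrite ?orbT.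
have := subset_leq_card covered; rewrite cardsU card_vert_set // q4.
by have := card_meet_le2 faces_meet qh1; have := card_meet_le2 faces_meet qh2; lia.
Qed.

End Type4446.

Theorem lemma4p4 (V F : finType) (bd : F -> seq V) :
  semi_equivelar bd [:: 4; 4; 4; 6]%N -> euler_char bd <> (-1)%R.
Proof.
case=> [[polygon [_ [edge_on_two_faces [_ [faces_meet _]]]]] vtype] chi.
have nV : #|V| = 12.
  by have := euler_char_4446 polygon edge_on_two_faces vtype; rewrite chi; lia.
have nH : #|faces_of_size bd 6| == 2.
  by have := card_faces_of_size polygon vtype 6; rewrite nV /=; lia.
have nQ : #|faces_of_size bd 4| = 9.
  by have := card_faces_of_size polygon vtype 4; rewrite nV /=; lia.
have [h1 [h2 [_ hexagons]]] := cards2P _ nH.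
have h1_hex : size (bd h1) = 6.
  by apply/eqP; have := set21 h1 h2; rewrite -hexagons inE.
have h1_notin : h1 \notin faces_of_size bd 4 by rewrite inE h1_hex.
have := card_faces_meeting_in_edge polygon edge_on_two_faces h1_notin
          (quad_meets_hexagon polygon vtype faces_meet hexagons).
by rewrite nQ h1_hex.
Qed.
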